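(* Let $M$ be a matroid of rank $r$ on a finite ground set $E$ with set of bases $\mathcal{B}(M)$, and let $(E_1,E_2)$ be a good partition of $E$ with associated integers $r_1,r_2,a_1,a_2$ (as defined in the context). Define $$\mathcal{B}_1=\{B\in\mathcal{B}(M): |B\cap E_1|\le r_1-a_1\},\qquad \mathcal{B}_2=\{B\in\mathcal{B}(M): |B\cap E_2|\le r_2-a_2\}.$$ Then $\mathcal{B}_1$ and $\mathcal{B}_2$ are each the collection of bases of a matroid on $E$.
   Context: For $A\subseteq E$, $M|_A$ denotes the restriction of $M$ to $A$, whose independent sets are the independent sets of $M$ contained in $A$; $\mathcal{I}(N)$ denotes the family of independent sets of a matroid $N$. A partition $(E_1,E_2)$ of $E$ (so $E=E_1\cup E_2$, $E_1\cap E_2=\emptyset$) with $r_i$ the rank of $M|_{E_i}$ and $r_i>1$ for $i=1,2$ is called a good partition if there exist integers $a_1,a_2$ with $0<a_1<r_1$ and $0<a_2<r_2$ such that (P1) $r_1+r_2=r+a_1+a_2$, and (P2) for every $X\in\mathcal{I}(M|_{E_1})$ with $|X|\le r_1-a_1$ and every $Y\in\mathcal{I}(M|_{E_2})$ with $|Y|\le r_2-a_2$, one has $X\cup Y\in\mathcal{I}(M)$. *)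

(* A matroid on the finite ground set E is represented with
   E = the finite type T (the whole type), via its family of independent sets. *)
From mathcomp Require Import all_boot.
Set Implicit Arguments. Unset Strict Implicit. Unset Printing Implicit Defensive.

Section Matroid.
Variable T : finType.

Definition is_matroid (I : {set {set T}}) : Prop :=
  [/\ set0 \in I,
      (forall A B : {set T}, B \in I -> A \subset B -> A \in I) &
      (forall A B : {set T}, A \in I -> B \in I -> #|A| < #|B| ->
         exists2 x, x \in B :\: A & x |: A \in I)].

Definition bases (I : {set {set T}}) : {set {set T}} :=
  [set B in I | [forall C in I, (B \subset C) ==> (C == B)]].

Definition restrict (I : {set {set T}}) (A : {set T}) : {set {set T}} :=
  [set X in I | X \subset A].

Definition rk (I : {set {set T}}) (A : {set T}) : nat :=
  \max_(X in restrict I A) #|X|.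

Definition mrank (I : {set {set T}}) : nat := rk I [set: T].

Definition good_partition (I : {set {set T}}) (E1 E2 : {set T}) (a1 a2 : nat)
  : Prop :=
  [/\ E1 :|: E2 = [set: T], E1 :&: E2 = set0,
      [/\ 1 < rk I E1, 1 < rk I E2, 0 < a1 < rk I E1 & 0 < a2 < rk I E2],
      rk I E1 + rk I E2 = mrank I + a1 + a2 &
      (forall X Y : {set T}, X \in restrict I E1 -> #|X| <= rk I E1 - a1 ->
          Y \in restrict I E2 -> #|Y| <= rk I E2 - a2 -> X :|: Y \in I)].

Definition is_bases_of_matroid (Bs : {set {set T}}) : Prop :=
  exists I : {set {set T}}, is_matroid I /\ bases I = Bs.

End Matroid.

(* Let (E1, E2) be a good partition of the ground set of a matroid I, with
   k = r1 - a1 and l = r2 - a2.  By (P1), k + l is the rank of I, and (P2)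
   says that any independent X in E1 with |X| <= k and any independent Y in
   E2 with |Y| <= l form an independent union.  The bases B of I with
   |B n E1| <= k are then exactly the bases of the "capped" family
     I' = { X in I : |X n E1| <= k }. *)

From mathcomp Require Import all_boot zify.
Set Implicit Arguments. Unset Strict Implicit. Unset Printing Implicit Defensive.

Lemma subset_of_card (T : finType) (A : {set T}) (n : nat) :
  n <= #|A| -> exists2 B : {set T}, B \subset A & #|B| = n.
Proof.
case/card_geqP=> s [uniq_s size_s sA].
exists [set x in s]; first by apply/subsetP=> x; rewrite inE; exact: sA.
by rewrite cardsE (card_uniqP uniq_s).
Qed.

Section SplitSets.
Variables (T : finType) (E : {set T}).

Lemma join_capE (X Y : {set T}) :
  X \subset E -> Y \subset ~: E -> (X :|: Y) :&: E = X.
Proof.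
move=> XE YE; have YE0 : Y :&: E = set0.
  by apply/eqP; rewrite -subset0 -(setICr E) setIC; exact: setIS.
by rewrite setIUl YE0 setU0 (setIidPl XE).
Qed.

Lemma join_diffE (X Y : {set T}) :
  X \subset E -> Y \subset ~: E -> (X :|: Y) :\: E = Y.
Proof.
move=> XE YE; have /eqP XE0 : X :\: E == set0 by rewrite setD_eq0.
by rewrite setDUl XE0 set0U setDE (setIidPl YE).
Qed.

Lemma setU1_capE (x : T) (A : {set T}) : x \notin E -> (x |: A) :&: E = A :&: E.
Proof.
move=> xE; apply/setP=> y; rewrite !inE.
by case: eqP => //= ->; rewrite (negbTE xE) !andbF.
Qed.

Lemma setU1_cap_le (x : T) (A : {set T}) : #|(x |: A) :&: E| <= #|A :&: E|.+1.
Proof.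
rewrite setIUl; apply: leq_trans (leq_card_setU _ _) _.
by rewrite -add1n leq_add2r (leq_trans (subset_leq_card (subsetIl _ _))) ?cards1.
Qed.

End SplitSets.

Section MatroidFacts.
Variables (T : finType) (I : {set {set T}}).

Lemma in_restrict (E X : {set T}) :
  (X \in restrict I E) = (X \in I) && (X \subset E).
Proof. by rewrite inE. Qed.

Lemma indep_card_le_mrank (X : {set T}) : X \in I -> #|X| <= mrank I.
Proof.
move=> XI; rewrite /mrank /rk (bigD1 X) ?leq_maxl //=.
by rewrite in_restrict XI subsetT.
Qed.

(* A submatroid J of I containing an independent set of full rank has as
   bases exactly the bases of I lying in J: its bases have full rank by
   augmentation, hence are maximal in I. *)
Lemma bases_of_submatroid (J : {set {set T}}) :
  is_matroid J -> J \subset I -> (exists2 Z, Z \in J & #|Z| = mrank I) ->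
  bases J = bases I :&: J.
Proof.
case=> _ _ J_aug /subsetP JI [Z ZJ cardZ].
apply/setP=> B; rewrite !inE [LHS]andbC andbAC.
have [BJ | _] := boolP (B \in J); last by rewrite !andbF.
rewrite (JI B BJ) !andbT.
apply/forall_inP/forall_inP => maxB C CI; apply/implyP => BC; last first.
  by rewrite (implyP (maxB C (JI C CI))).
have cardB : #|B| = mrank I.
  apply/eqP; rewrite eqn_leq indep_card_le_mrank ?JI //= leqNgt -cardZ.
  apply/negP=> /(J_aug _ _ BJ ZJ) [x /setDP[_ xB] xBJ].
  move: (maxB _ xBJ); rewrite subsetUr /= => /eqP/setP/(_ x).
  by rewrite !inE eqxx (negbTE xB).
by rewrite eq_sym eqEcard BC cardB indep_card_le_mrank.
Qed.

Hypothesis matI : is_matroid I.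

Lemma indep_of_card (E : {set T}) (n : nat) :
  n <= rk I E -> exists2 X : {set T}, X \in restrict I E & #|X| = n.
Proof.
case: matI => I0 I_sub _ n_le.
have R0 : set0 \in restrict I E by rewrite in_restrict I0 sub0set.
move: n_le; rewrite /rk (bigmax_eq_arg _ R0).
case: arg_maxnP => // X XR _ n_le.
have /andP[XI XE] : (X \in I) && (X \subset E) by rewrite -in_restrict.
have [Y YX <-] := subset_of_card n_le.
by exists Y; rewrite // in_restrict (I_sub _ _ XI YX) (subset_trans YX XE).
Qed.

End MatroidFacts.

Section OneSidedCap.
Variables (T : finType) (I : {set {set T}}) (E : {set T}) (k l : nat).
Hypothesis matI : is_matroid I.
Hypothesis rank_sum : k + l = mrank I.
Hypothesis join_indep : forall X Y : {set T},
  X \in restrict I E -> #|X| <= k -> Y \in restrict I (~: E) -> #|Y| <= l ->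
  X :|: Y \in I.

Definition capped : {set {set T}} := [set X in I | #|X :&: E| <= k].

(* Augmentation in the capped family when A already meets E in k elements:
   A has fewer than l elements outside E and fewer than B has there, so a
   suitable part Y of B \ E joins with A n E to an independent set larger
   than A; augmenting A from it must use a point of Y, which lies outside E. *)
Lemma saturated_augment (A B : {set T}) :
  A \in capped -> B \in capped -> #|A| < #|B| -> #|A :&: E| = k ->
  exists2 x, x \in B :\: A & x |: A \in capped.
Proof.
case: matI => _ I_sub I_aug; rewrite !inE => /andP[AI _] /andP[BI BEk] AB AEk.
have A_split := cardsID E A; have B_split := cardsID E B.
have AB_out : #|A :\: E| < #|B :\: E| by lia.
have [Y YB cardY] := subset_of_card AB_out.
have YE : Y \subset ~: E by rewrite (subset_trans YB) // setDE subsetIr.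
have AE_E : A :&: E \subset E := subsetIr A E.
pose C := (A :&: E) :|: Y.
have CI : C \in I.
  apply: join_indep; rewrite ?in_restrict ?(I_sub _ _ AI (subsetIl A E)) ?AEk //.
    by rewrite (I_sub _ _ BI (subset_trans YB (subsetDl B E))).
  have := indep_card_le_mrank BI; lia.
have AC : #|A| < #|C|.
  by rewrite -(cardsID E C) /C (join_capE AE_E YE) (join_diffE AE_E YE); lia.
have [x /setDP[xC xA] xAI] := I_aug _ _ AI CI AC.
have xY : x \in Y by move: xC; rewrite !inE (negbTE xA).
have xE : x \notin E by have := subsetP YE x xY; rewrite inE.
exists x; first by rewrite inE xA (subsetP (subsetDl B E)) ?(subsetP YB).
by rewrite inE xAI setU1_capE // AEk /=.
Qed.

Lemma capped_sub : capped \subset I.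
Proof. by apply/subsetP=> X; rewrite inE => /andP[]. Qed.

Lemma capped_matroid : is_matroid capped.
Proof.
case: matI => I0 I_sub I_aug; split.
- by rewrite inE I0 set0I cards0.
- move=> A B /[!inE] /andP[BI BEk] AB; rewrite (I_sub _ _ BI AB).
  by rewrite (leq_trans _ BEk) ?subset_leq_card ?setSI.
move=> A B Acap Bcap AB; have /[!inE] /andP[AI AEk] := Acap.
have [AE_lt | AE_ge] := ltnP #|A :&: E| k; last first.
  by apply: saturated_augment => //; apply/eqP; rewrite eqn_leq AEk.
have [x xBA xAI] := I_aug _ _ AI (subsetP capped_sub B Bcap) AB.
by exists x => //; rewrite inE xAI (leq_trans (setU1_cap_le E x A)).
Qed.

Hypothesis k_le_rk : k <= rk I E.
Hypothesis l_le_rk : l <= rk I (~: E).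

Lemma capped_full : exists2 Z, Z \in capped & #|Z| = mrank I.
Proof.
have [X XR cardX] := indep_of_card matI k_le_rk.
have [Y YR cardY] := indep_of_card matI l_le_rk.
have XE : X \subset E by move: XR; rewrite in_restrict => /andP[].
have YE : Y \subset ~: E by move: YR; rewrite in_restrict => /andP[].
exists (X :|: Y).
  by rewrite inE join_indep ?cardX ?cardY // (join_capE XE YE) cardX leqnn.
by rewrite -(cardsID E (X :|: Y)) (join_capE XE YE) (join_diffE XE YE) cardX cardY.
Qed.

Lemma capped_bases :
  is_bases_of_matroid [set B in bases I | #|B :&: E| <= k].
Proof.
exists capped; split; first exact: capped_matroid.
rewrite (bases_of_submatroid capped_matroid capped_sub capped_full).
apply/setP=> B; rewrite !inE.
by case: (B \in I); rewrite /= ?andbT.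
Qed.

End OneSidedCap.

Section GoodPartition.
Variables (T : finType) (I : {set {set T}}) (E1 E2 : {set T}) (a1 a2 : nat).
Hypothesis good : good_partition I E1 E2 a1 a2.

Lemma good_partition_compl : E2 = ~: E1.
Proof.
case: good => cover disj _ _ _; apply/setP=> x; rewrite inE.
move/setP/(_ x): cover; move/setP/(_ x): disj; rewrite !inE.
by case: (x \in E1); case: (x \in E2).
Qed.

Lemma good_partition_sym : good_partition I E2 E1 a2 a1.
Proof.
case: good => cover disj [r1 r2 a1_rng a2_rng] rank_eq indep.
split; rewrite 1?setUC 1?setIC //; first lia.
by move=> X Y XR cardX YR cardY; rewrite setUC indep.
Qed.

Lemma good_partition_bases :
  is_matroid I ->
  is_bases_of_matroid [set B in bases I | #|B :&: E1| <= rk I E1 - a1].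
Proof.
move=> matI; have E2E1 := good_partition_compl.
case: good => _ _ [_ _ /andP[_ a1_lt] /andP[_ a2_lt]] rank_eq indep.
apply: (capped_bases (l := rk I E2 - a2)) => //.
- lia.
- by rewrite -E2E1.
- exact: leq_subr.
- by rewrite -E2E1 leq_subr.
Qed.

End GoodPartition.

Theorem lemma1 (T : finType) (I : {set {set T}}) (E1 E2 : {set T}) (a1 a2 : nat) :
  is_matroid I ->
  good_partition I E1 E2 a1 a2 ->
  is_bases_of_matroid [set B in bases I | #|B :&: E1| <= rk I E1 - a1] /\
  is_bases_of_matroid [set B in bases I | #|B :&: E2| <= rk I E2 - a2].
Proof.
move=> matI good; split; first exact: good_partition_bases good matI.
exact: good_partition_bases (good_partition_sym good) matI.
Qed.
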